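(* Let $0\neq g\in\mathbb F_q[z]$, write $g=z^rg_0$ with $r\ge0$ and $g_0(0)\neq0$, and let $d_0=\deg g_0+m$ and $F_{g_0}(z)=P(z)g_0(z)g_0^*(z)$. Let $N\ge0$. Then $h\in V_N$ lies in the radical of the bilinear form $B_{g,N}(h,w)=B_A(gh,gw)$ on $V_N$ (i.e. $B_{g,N}(h,w)=0$ for all $w\in V_N$) if and only if \[ [z^j]\,F_{g_0}(z)h(z)=0\qquad\text{for all } d_0\le j\le d_0+N. \] In particular, $\dim\operatorname{rad}(B_{g,N})=\dim\operatorname{rad}(B_{g_0,N})$.
   Context: $q$ is an odd prime power; fix $m\ge0$, $c_0,\dots,c_m\in\mathbb F_q$ with $c_m\ne0$, $A(z)=c_0+\tfrac12\sum_{\ell=1}^m c_\ell(z^\ell+z^{-\ell})$ and $P(z)=z^mA(z)\in\mathbb F_q[z]$. $B_A(f,h)=\operatorname{CT}\,A(z)f(z)h(z^{-1})$ for polynomials $f,h$, where $\operatorname{CT}$ is the constant term of a Laurent polynomial. $V_N$ is the space of polynomials of degree $\le N$, $[z^j]F$ is the coefficient of $z^j$ in $F$, and for $g_0$ of degree $k_0$, $g_0^*(z)=z^{k_0}g_0(z^{-1})$. *)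

From HB Require Import structures.
From mathcomp Require Import all_boot all_order all_algebra all_field.
Set Implicit Arguments. Unset Strict Implicit. Unset Printing Implicit Defensive.
Import Order.TTheory GRing.Theory Num.Theory.
Local Open Scope ring_scope.

(* Coefficient of z^k (k : int) in the Laurent polynomial
   A(z) = c_0 + 1/2 sum_{l=1}^m c_l (z^l + z^-l). Only c 0 .. c m are used. *)
Definition Acoef (F : fieldType) (c : nat -> F) (m : nat) (k : int) : F :=
  if (`|k| <= m)%N then (if k == 0 then c 0%N else c `|k|%N / 2) else 0.

(* B_A(f,h) = CT A(z) f(z) h(z^-1), written out coefficientwise:
   the term f_i z^i * h_j z^-j * a_k z^k contributes iff k = j - i. *)
Definition BA (F : fieldType) (c : nat -> F) (m : nat) (f h : {poly F}) : F :=
  \sum_(i < size f) \sum_(j < size h) f`_i * h`_j * Acoef c m (j%:Z - i%:Z).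

(* P(z) = z^m A(z) *)
Definition Ppoly (F : fieldType) (c : nat -> F) (m : nat) : {poly F} :=
  \poly_(i < (2 * m).+1) Acoef c m (i%:Z - m%:Z).

(* g0^*(z) = z^{deg g0} g0(z^-1) *)
Definition recip (F : fieldType) (g0 : {poly F}) : {poly F} :=
  \poly_(i < size g0) g0`_(size g0 - 1 - i).

Definition gram (F : fieldType) (c : nat -> F) (m : nat) (g : {poly F}) (N : nat)
  : 'M[F]_(N.+1) :=
  \matrix_(i < N.+1, j < N.+1) BA c m (g * 'X^i) (g * 'X^j).

(* The radical of B_{g,N} (coefficient row vectors h with h *m gram = 0,
   i.e. B_{g,N}(h,w) = 0 for all w), as a row space. *)
Definition radmx (F : fieldType) (c : nat -> F) (m : nat) (g : {poly F}) (N : nat)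
  : 'M[F]_(N.+1) := kermx (gram c m g N).

From HB Require Import structures.
From mathcomp Require Import all_boot all_order all_algebra all_field.
From mathcomp Require Import zify ring.
Import Order.TTheory GRing.Theory Num.Theory.
Local Open Scope ring_scope.

(* B_A(f,u) = sum_j u_j [z^(j+m)] (f P); for f = g0 h and u = g0 w this is
   sum_s w_s [z^(s+d0)] (P g0 g0^* h), as multiplying by g0^* turns the
   correlation with g0 into an ordinary product.  Testing with w = z^k, k <= N,
   gives the criterion.  The factor z^r cancels in CT f(z) u(1/z), so g and g0
   even have the same Gram matrix. *)

Lemma sum_ord_widen0 (V : nmodType) n n' (F : nat -> V) : (n <= n')%N ->
  (forall i, (n <= i)%N -> F i = 0) -> \sum_(i < n) F i = \sum_(i < n') F i.
Proof.
move=> le_nn' F0; rewrite -(subnKC le_nn') big_split_ord /=.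
by rewrite [X in _ = _ + X]big1 ?addr0 // => i _; rewrite F0 ?leq_addr.
Qed.

Arguments sum_ord_widen0 {V n} n' F.

Lemma sum_coefM (F : comNzSemiRingType) (p q : {poly F}) (R : nat -> F) :
  \sum_(j < size (p * q)) (p * q)`_j * R j =
  \sum_(s < size q) q`_s * \sum_(t < size p) p`_t * R (t + s)%N.
Proof.
rewrite (sum_ord_widen0 (size p + size q) (fun j => (p * q)`_j * R j)); last first.
- by move=> i le_pqi; rewrite nth_default // mul0r.
- by rewrite (leq_trans (size_polyMleq _ _)) // leq_pred.
under eq_bigr => j _ do
  rewrite -{1}(coefK p) poly_def mulr_suml coef_sum mulr_suml.
rewrite exchange_big /=.
under [RHS]eq_bigr => s _ do rewrite mulr_sumr.
rewrite [RHS]exchange_big /=; apply: eq_bigr => t _.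
have le_t : (t <= size p + size q)%N by rewrite ltnW // ltn_addr.
rewrite -(subnKC le_t) big_split_ord /= big1 ?add0r; last first.
  by move=> j _; rewrite -scalerAl coefZ coefXnM ltn_ord mulr0 mul0r.
rewrite [RHS](sum_ord_widen0 (size p + size q - t) (fun s => q`_s * (p`_t * R (t + s)%N)));
  last first.
- by move=> i le_qi; rewrite nth_default // mul0r.
- by rewrite leq_subRL ?leq_add2r // ltnW.
apply: eq_bigr => s _; rewrite -scalerAl coefZ coefXnM ltnNge leq_addr /= addKn.
by rewrite mulrCA mulrA.
Qed.

Section BilinearForm.
Variables (F : fieldType) (c : nat -> F) (m : nat).

Lemma Acoef_eq0 k : (m < `|k|)%N -> Acoef c m k = 0.
Proof. by move=> lt_mk; rewrite /Acoef leqNgt lt_mk. Qed.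

Lemma coef_Ppoly i : (Ppoly c m)`_i = Acoef c m (i%:Z - m%:Z).
Proof.
rewrite /Ppoly coef_poly; case: ifP => // /negbT; rewrite -leqNgt => le_i.
by rewrite Acoef_eq0 //; lia.
Qed.

Lemma BA_Ppoly (f u : {poly F}) n : (size u <= n)%N ->
  BA c m f u = \sum_(j < n) u`_j * (f * Ppoly c m)`_(j + m).
Proof.
move=> le_un; rewrite -(sum_ord_widen0 _ (fun j => u`_j * (f * Ppoly c m)`_(j + m)) le_un);
  last first.
  by move=> j le_uj; rewrite nth_default // mul0r.
rewrite /BA exchange_big /=; apply: eq_bigr => j _.
rewrite coefM mulr_sumr.
transitivity (\sum_(i < (j + m).+1) u`_j * (f`_i * Acoef c m (j%:Z - i%:Z))); last first.
  apply: eq_bigr => i _; rewrite coef_Ppoly; congr (_ * (_ * Acoef _ _ _)).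
  by have := ltn_ord i; lia.
rewrite (sum_ord_widen0 (size f + (j + m).+1)
  (fun i => f`_i * u`_j * Acoef c m (j%:Z - i%:Z)) (leq_addr _ _)); last first.
  by move=> i le_fi; rewrite nth_default // !mul0r.
rewrite [RHS](sum_ord_widen0 (size f + (j + m).+1)
  (fun i => u`_j * (f`_i * Acoef c m (j%:Z - i%:Z))) (leq_addl _ _)); last first.
  by move=> i lt_i; rewrite Acoef_eq0 ?mulr0 //; lia.
by apply: eq_bigr => i _; rewrite mulrCA mulrA.
Qed.

Lemma BA_XnM r (f u : {poly F}) : BA c m ('X^r * f) ('X^r * u) = BA c m f u.
Proof.
have le_Xu : (size ('X^r * u)%R <= r + size u)%N.
  by rewrite (leq_trans (size_polyMleq _ _)) // size_polyXn.
rewrite (BA_Ppoly _ _ _ le_Xu) (BA_Ppoly _ _ _ (leqnn _)) big_split_ord /=.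
rewrite big1 ?add0r => [|j _]; last by rewrite coefXnM ltn_ord mul0r.
apply: eq_bigr => j _; rewrite -mulrA !coefXnM ltnNge leq_addr /= addKn.
by rewrite -addnA ltnNge leq_addr /= addKn.
Qed.

Lemma coef_mul_recip (Q g0 : {poly F}) n :
  (Q * recip g0)`_(n + (size g0).-1) = \sum_(t < size g0) g0`_t * Q`_(n + t).
Proof.
have [->|nz_g0] := eqVneq g0 0.
  by rewrite /recip size_poly0 big_ord0 poly_def big_ord0 mulr0 coef0.
have sz : size g0 = (size g0).-1.+1 by rewrite prednK // size_poly_gt0.
rewrite coefMr
  -(@sum_ord_widen0 _ (size g0) _ (fun j => Q`_(n + (size g0).-1 - j) * (recip g0)`_j));
  last first.
- by move=> i le_gi; rewrite /recip coef_poly ltnNge le_gi mulr0.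
- by rewrite {1}sz ltnS leq_addl.
rewrite [in RHS]sz (reindex_inj rev_ord_inj) /= -sz.
apply: eq_bigr => i _; rewrite /recip coef_poly /=.
have lt_i := ltn_ord i; rewrite ifT; last by lia.
by rewrite mulrC; congr (_`_ _ * _`_ _); lia.
Qed.

Lemma BA_mul_coef (g0 h w : {poly F}) :
  BA c m (g0 * h) (g0 * w) =
  \sum_(s < size w) w`_s * (Ppoly c m * g0 * recip g0 * h)`_(s + ((size g0).-1 + m)).
Proof.
rewrite (BA_Ppoly _ _ _ (leqnn _)) (sum_coefM _ _ _ (fun j => (g0 * h * Ppoly c m)`_(j + m))).
apply: eq_bigr => s _; congr (_ * _).
have -> : Ppoly c m * g0 * recip g0 * h = g0 * h * Ppoly c m * recip g0 by ring.
rewrite (_ : s + _ = s + m + (size g0).-1)%N ?coef_mul_recip; last by lia.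
by apply: eq_bigr => t _; rewrite [(t + s)%N]addnC addnAC.
Qed.

Lemma BA_radicalP (g0 h : {poly F}) N :
  (forall w : {poly F}, (size w <= N.+1)%N -> BA c m (g0 * h) (g0 * w) = 0) <->
  (forall j, ((size g0).-1 + m <= j <= (size g0).-1 + m + N)%N ->
     (Ppoly c m * g0 * recip g0 * h)`_j = 0).
Proof.
set d0 := ((size g0).-1 + m)%N; split.
- move=> rad_h j /andP[le_d0j le_jN].
  have := rad_h ('X^(j - d0)); rewrite size_polyXn ltnS leq_subLR => /(_ le_jN).
  rewrite BA_mul_coef size_polyXn big_ord_recr /= big1 ?add0r; last first.
    by move=> i _; rewrite coefXn (ltn_eqF (ltn_ord i)) mul0r.
  by rewrite coefXn eqxx mul1r subnK.
- move=> coef_h0 w le_wN; rewrite BA_mul_coef; apply: big1 => s _.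
  by rewrite coef_h0 ?mulr0 //; have := ltn_ord s; lia.
Qed.

Lemma gram_XnM r (g : {poly F}) N : gram c m ('X^r * g) N = gram c m g N.
Proof. by apply/matrixP => i j; rewrite !mxE -!mulrA BA_XnM. Qed.

End BilinearForm.

Theorem lemma5p1 (F : finFieldType) (Hodd : odd #|F|)
  (m : nat) (c : nat -> F) (hcm : c m != 0)
  (g : {poly F}) (r : nat) (g0 : {poly F})
  (hg0 : g != 0) (hg : g = 'X^r * g0) (hg00 : g0`_0 != 0)
  (N : nat) :
  let d0 := ((size g0).-1 + m)%N in
  let Fg0 := Ppoly c m * g0 * recip g0 in
  (forall h : {poly F}, (size h <= N.+1)%N ->
     ((forall w : {poly F}, (size w <= N.+1)%N -> BA c m (g * h) (g * w) = 0)
      <-> (forall j : nat, (d0 <= j <= d0 + N)%N -> (Fg0 * h)`_j = 0)))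
  /\ \rank (radmx c m g N) = \rank (radmx c m g0 N).
Proof.
move=> d0 Fg0; rewrite hg; split; last by rewrite /radmx gram_XnM.
move=> h _; apply: iff_trans _ (BA_radicalP _ c m g0 h N).
by split=> rad_h w /rad_h; rewrite -!mulrA BA_XnM.
Qed.
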